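(* Let $M\ge1$. Then $\kappa(\mathsf{S}_M)=\mathfrak{L}_M$, and for every $k\in\mathfrak{L}_M$, $$\{\beta(\mathsf{p}):\mathsf{p}\in\mathsf{S}_M,\ \kappa(\mathsf{p})=k\}=\{b\in\mathbb{Z}^{M+1}:\min\{\mathbb{1},\tilde k\}\le b\le\min\{k,\tilde k\}\},$$ equivalently the Cartesian product $V_0\times\cdots\times V_M$ with $V_n=\{\min\{1,\tilde k_n\},\ldots,\min\{k_n,\tilde k_n\}\}$.
   Context: Scattering sequences: $\mathsf{S}_M$ is the set of integer sequences $\mathsf{p}=(i_0,\ldots,i_L)$ with $L\ge2$, $i_0=i_L=-1$, $i_j\in\{0,\ldots,M\}$ for $1\le j\le L-1$, and $|i_{j+1}-i_j|=1$ for $0\le j\le L-1$ ($i_j=m$ means the pulse is at depth $z_m$). Transit count vector $\kappa(\mathsf{p})=(k_0,\ldots,k_M)$: for $0\le n\le M$, $k_n$ is the number of maximal blocks of consecutive indices $j\in\{0,\ldots,L\}$ with $i_j\ge n$. Branch count vector $\beta(\mathsf{p})=(b_0,\ldots,b_M)$: $b_n$ is the number of those maximal blocks containing at least two indices. $\mathfrak{L}_M\subset\mathbb{Z}^{M+1}_{\geq0}$: all $k$ with $k_0=1$ and $k_n>0\Rightarrow k_{n-1}>0$ ($1\le n\le M$). $\tilde k=(k_1,\ldots,k_M,0)$; $\mathbb{1}=(1,\ldots,1)$; inequalities and $\min$ are entrywise. *)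

From HB Require Import structures.
From mathcomp Require Import all_boot all_order all_algebra.
Set Implicit Arguments. Unset Strict Implicit. Unset Printing Implicit Defensive.
Import Order.TTheory GRing.Theory Num.Theory.

(* A sequence p = (i_0, ..., i_L) is represented as a list of integers of
   length L+1; its j-th entry is nth 0 p j. *)
Local Open Scope ring_scope.

Definition ent (p : seq int) (j : nat) : int := nth 0 p j.

Definition scattering_seq (M : nat) (p : seq int) : Prop :=
  [/\ (3 <= size p)%N,
      ent p 0 = -1, ent p (size p).-1 = -1,
      (forall j : nat, (0 < j)%N -> (j < (size p).-1)%N ->
          0 <= ent p j <= M%:Z)
    & (forall j : nat, (j.+1 < size p)%N ->
          `|ent p j.+1 - ent p j| = 1)].

Definition is_block (n : int) (p : seq int) (a b : nat) : bool :=
  [&& (a <= b)%N, (b < size p)%N,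
      [forall j : 'I_(size p), ((a <= j)%N && (j <= b)%N) ==> (n <= ent p j)],
      (a == 0%N) || (ent p a.-1 < n)
    & (b == (size p).-1) || (ent p b.+1 < n)].

Definition nblocks (n : int) (p : seq int) : nat :=
  (\sum_(a < size p) \sum_(b < size p) is_block n p a b)%N.

Definition nbranches (n : int) (p : seq int) : nat :=
  (\sum_(a < size p) \sum_(b < size p) ((a < b)%N && is_block n p a b))%N.

Definition kappa (M : nat) (p : seq int) : {ffun 'I_M.+1 -> nat} :=
  [ffun n : 'I_M.+1 => nblocks (n : nat)%:Z p].

Definition beta (M : nat) (p : seq int) : {ffun 'I_M.+1 -> nat} :=
  [ffun n : 'I_M.+1 => nbranches (n : nat)%:Z p].

Definition LM (M : nat) (k : {ffun 'I_M.+1 -> nat}) : Prop :=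
  k ord0 = 1%N /\
  (forall n : 'I_M.+1, (1 <= n)%N -> (0 < k n)%N -> (0 < k (inord n.-1))%N).

Definition ktilde (M : nat) (k : {ffun 'I_M.+1 -> nat}) (n : 'I_M.+1) : nat :=
  if (n < M)%N then k (inord n.+1) else 0%N.

(* For a sequence moving by unit steps from [-1], a maximal block of indices
   with [i_j >= n] starts exactly at an up-crossing [n-1 -> n], and it has at
   least two indices exactly when the crossing goes on to [n+1] (a climb).
   Hence [k_n] counts up-crossings into [n] and [b_n] counts climbs through [n].

   Necessity: [k_0 = 1]; a crossing into [n] needs an earlier one into [n-1];
   a climb through [n] is a crossing into [n] followed by one into [n+1], so
   [b <= min(k, k~)]; the step before the first crossing into [n+1] is a climb
   through [n], so [b_n >= 1] when [k_(n+1) > 0]; nothing climbs through [M].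

   Sufficiency: a scattering sequence is the contour of a plane tree whose
   vertices at depth [n] are its crossings into [n], the inner ones being its
   climbs.  Given admissible [(k, b)] the tree is built bottom-up: the [k_n]
   vertices of depth [n] share the [k_(n+1)] subtrees of depth [n+1] so that
   exactly [b_n] of them get children.  Contours are excursions, obtained by
   lifting ([lift]) and concatenating ([glue]) shorter ones, and both counts
   are additive under these operations. *)

From HB Require Import structures.
From mathcomp Require Import all_boot all_order all_algebra zify.
Import Order.TTheory GRing.Theory Num.Theory.
Set Implicit Arguments. Unset Strict Implicit. Unset Printing Implicit Defensive.
Open Scope ring_scope.

Definition starts_block (n : int) (p : seq int) (a : nat) : bool :=
  [&& (a < size p)%N, n <= ent p a & (a == 0%N) || (ent p a.-1 < n)].

Definition starts_branch (n : int) (p : seq int) (a : nat) : bool :=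
  [&& starts_block n p a, (a.+1 < size p)%N & n <= ent p a.+1].

Lemma is_block_start n p a b : is_block n p a b -> starts_block n p a.
Proof.
case/and5P=> hab hb /forallP hall hs _.
have ha : (a < size p)%N by apply: leq_ltn_trans hb.
apply/and3P; split=> //.
by have := hall (Ordinal ha); rewrite /= leqnn hab.
Qed.

Lemma is_block_uniq n p a b b' : is_block n p a b -> is_block n p a b' -> b = b'.
Proof.
wlog hle : b b' / (b <= b')%N.
  move=> W H1 H2; case: (leqP b b') => h; first exact: W.
  by symmetry; apply: W => //; apply: ltnW.
move=> H1 H2; apply/eqP; rewrite eqn_leq hle /= leqNgt; apply/negP=> hlt.
case/and5P: H1 => hab hb _ _ he.
case/and5P: H2 => _ hb' /forallP hall _ _.
have hs : (b.+1 < size p)%N by apply: leq_ltn_trans hb'.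
have := hall (Ordinal hs); rewrite /= hlt (leq_trans hab) //= => hn.
move: he; have -> : (b == (size p).-1) = false by apply/eqP; lia.
by rewrite /= ltNge hn.
Qed.

(* Every block start is the start of a block: its end is the first index
   after which the sequence drops below [n] (or the last index). *)
Lemma starts_block_end n p a : starts_block n p a -> exists b, is_block n p a b.
Proof.
case/and3P=> ha hna hs.
pose P b := (a <= b)%N && ((b == (size p).-1) || (ent p b.+1 < n)).
have exP : exists b, P b by exists (size p).-1; rewrite /P eqxx /= andbT; lia.
case: (ex_minnP exP) => b0 /andP[hab0 he] hmin.
have hb0 : (b0 < size p)%N.
  have : (b0 <= (size p).-1)%N by apply: hmin; rewrite /P eqxx andbT; lia.
  lia.
have above : forall t, (a + t <= b0)%N -> n <= ent p (a + t).
  elim=> [|t IH] h; first by rewrite addn0.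
  have h1 : n <= ent p (a + t) by apply: IH; lia.
  have : ~~ P (a + t) by apply/negP=> /hmin; lia.
  by rewrite /P leq_addr /= negb_or -leNgt addnS => /andP[_].
exists b0; apply/and5P; split=> //.
apply/forallP=> j; apply/implyP=> /andP[h1 h2].
have e : (a + (j - a))%N = j by lia.
by rewrite -e; apply: above; lia.
Qed.

Lemma count_blocks_at n p (a : 'I_(size p)) :
  (\sum_(b < size p) is_block n p a b)%N = starts_block n p a.
Proof.
case: (boolP (starts_block n p a)) => Hs; last first.
  by rewrite big1 // => b _; case E: (is_block n p a b); rewrite // (is_block_start E) in Hs.
have [b0 Hb0] := starts_block_end Hs.
have hb0 : (b0 < size p)%N by case/and5P: Hb0.
rewrite (bigD1 (Ordinal hb0)) //= Hb0 big1 // => b /eqP hb.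
case E: (is_block n p a b) => //; case: hb; apply: val_inj.
exact: is_block_uniq E Hb0.
Qed.

Lemma count_branches_at n p (a : 'I_(size p)) :
  (\sum_(b < size p) ((a < b)%N && is_block n p a b))%N = starts_branch n p a.
Proof.
rewrite /starts_branch; case: (boolP (starts_block n p a)) => Hs /=; last first.
  rewrite big1 // => b _; case E: (is_block n p a b); rewrite ?andbF //.
  by rewrite (is_block_start E) in Hs.
have [b0 Hb0] := starts_block_end Hs.
have hb0 : (b0 < size p)%N by case/and5P: Hb0.
rewrite (bigD1 (Ordinal hb0)) //= Hb0 big1 ?addn0; last first.
  move=> b /eqP hb; case E: (is_block n p a b); rewrite ?andbF //.
  by case: hb; apply: val_inj; exact: is_block_uniq E Hb0.
case/and5P: Hb0 => hab _ /forallP hall _ he.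
case: (ltnP a b0) => hlt.
  have hs : (a.+1 < size p)%N by apply: leq_ltn_trans hb0.
  by have := hall (Ordinal hs); rewrite /= hlt ltnW //= => ->; rewrite hs.
have eab : b0 = a by apply/eqP; rewrite eqn_leq hab hlt.
move: he; rewrite eab => /orP[/eqP -> | ].
  by rewrite prednK ?ltnn // (leq_ltn_trans _ hb0).
by rewrite ltNge => /negbTE ->; rewrite andbF.
Qed.

(* Entries stay folded, so that the counting lemmas below can be rewritten. *)
Arguments ent : simpl never.

Definition unit_steps (p : seq int) : Prop :=
  forall j, (j.+1 < size p)%N -> `|ent p j.+1 - ent p j| = 1.

Lemma scattering_unit_steps M p : scattering_seq M p -> unit_steps p.
Proof. by case. Qed.

Lemma unit_stepsP p j : unit_steps p -> (j.+1 < size p)%N ->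
  ent p j.+1 = ent p j + 1 \/ ent p j.+1 = ent p j - 1.
Proof. move=> hst hj; have := hst j hj; lia. Qed.

Definition upcross (v : int) (p : seq int) : nat :=
  (\sum_(i < (size p).-1) ((ent p i == (v - 1)%R) && (ent p i.+1 == v)))%N.

Definition climbs (v : int) (p : seq int) : nat :=
  (\sum_(i < (size p).-1)
     [&& ent p i == (v - 1)%R, ent p i.+1 == v, (i.+2 < size p)%N & ent p i.+2 == (v + 1)%R])%N.

Section UnitSteps.
Variables (p : seq int) (n : int).
Hypotheses (hsz : (0 < size p)%N) (hst : unit_steps p) (hn : ent p 0 < n).

(* With unit steps starting below [n], a block above level [n] starts
   exactly where the sequence steps up from [n-1] to [n] ... *)
Lemma nblocks_upcross : nblocks n p = upcross n p.
Proof.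
rewrite /nblocks (eq_bigr _ (fun a _ => @count_blocks_at n p a)).
have [s hs] : exists s, size p = s.+1 by exists (size p).-1; rewrite prednK.
rewrite /upcross hs big_ord_recl /=.
have -> : starts_block n p 0 = false.
  by apply/negbTE; rewrite /starts_block; apply/negP => /and3P[_ ? _]; lia.
rewrite add0n; apply: eq_bigr => i _.
have hi : (i.+1 < size p)%N by rewrite hs ltnS.
have := unit_stepsP hst hi; rewrite /starts_block /bump /= add1n hi => e.
congr (nat_of_bool _); rewrite add0n /=; apply/andP/andP => [[h1 h2]|[/eqP h1 /eqP h2]].
  by split; apply/eqP; lia.
by split; lia.
Qed.

(* ... and such a block has two indices iff the next step goes up again. *)
Lemma nbranches_climbs : nbranches n p = climbs n p.
Proof.
rewrite /nbranches (eq_bigr _ (fun a _ => @count_branches_at n p a)).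
have [s hs] : exists s, size p = s.+1 by exists (size p).-1; rewrite prednK.
rewrite /climbs hs big_ord_recl /=.
have -> : starts_branch n p 0 = false.
  apply/negbTE; rewrite /starts_branch /starts_block.
  by apply/negP => /and3P[/and3P[_ ? _] _ _]; lia.
rewrite add0n; apply: eq_bigr => i _.
have hi : (i.+1 < size p)%N by rewrite hs ltnS.
have := unit_stepsP hst hi; rewrite /starts_branch /starts_block /bump /= add1n add0n hi => e.
congr (nat_of_bool _); rewrite -hs.
case: (boolP (i.+2 < size p)%N) => hi2; last by rewrite /= !andbF.
have := unit_stepsP hst hi2 => e2.
apply/andP/and4P => [[/andP[h1 h2] h3]|[/eqP h1 /eqP h2 _ /eqP h3]].
  by split=> //; apply/eqP; lia.
by split; [apply/andP; split|]; lia.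
Qed.

End UnitSteps.

Lemma kappaE M p (n : 'I_M.+1) : scattering_seq M p -> kappa M p n = upcross n p.
Proof.
case=> hsz h0 hL hin hst.
by rewrite ffunE nblocks_upcross ?h0 //; lia.
Qed.

Lemma betaE M p (n : 'I_M.+1) : scattering_seq M p -> beta M p n = climbs n p.
Proof.
case=> hsz h0 hL hin hst.
by rewrite ffunE nbranches_climbs ?h0 //; lia.
Qed.

Lemma sum_bool_gt0P (m : nat) (F : 'I_m -> bool) :
  reflect (exists i, F i) (0 < \sum_(i < m) F i)%N.
Proof.
rewrite lt0n sum_nat_eq0 negb_forall.
apply: (iffP existsP) => -[i hi]; exists i; move: hi; by case: (F i).
Qed.

Lemma first_upcross p (v : int) j : unit_steps p -> ent p 0 < v ->
  (j < size p)%N -> v <= ent p j ->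
  exists i, [/\ (i.+1 < size p)%N, ent p i = v - 1, ent p i.+1 = v &
              forall l, (l <= i)%N -> ent p l < v].
Proof.
move=> hst h0 hj hv.
pose P j := (j < size p)%N && (v <= ent p j).
have exP : exists j, P j by exists j; rewrite /P hj hv.
case: (ex_minnP exP) => j0 /andP[hj0 hv0] hmin.
have below : forall l, (l < j0)%N -> ent p l < v.
  move=> l hl; rewrite ltNge; apply/negP => hl'.
  have : (j0 <= l)%N by apply: hmin; rewrite /P hl' andbT; apply: ltn_trans hl hj0.
  lia.
have j0pos : (0 < j0)%N by case: j0 hj0 hv0 {hmin below} => // _ hv0; lia.
have hj0' : (j0.-1.+1 < size p)%N by rewrite prednK.
have hp : ent p j0.-1 < v by apply: below; lia.
have := unit_stepsP hst hj0'; rewrite prednK // => e.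
exists j0.-1; rewrite prednK //; split=> //; try lia.
by move=> l hl; apply: below; lia.
Qed.

Section Necessity.
Variables (M : nat) (p : seq int).
Hypothesis sc : scattering_seq M p.

Let hst : unit_steps p := scattering_unit_steps sc.
Let h0 : ent p 0 = -1. Proof. by case: sc. Qed.

Lemma upcross0 : upcross 0 p = 1%N.
Proof.
case: sc => hsz _ _ hin _.
have [s hs] : exists s, (size p).-1 = s.+2 by exists (size p - 3)%N; lia.
have h1 : ent p 1 = 0.
  have := hin 1%N isT; rewrite hs => /(_ isT).
  have := unit_stepsP (j := 0) hst (ltnW hsz); rewrite h0; lia.
rewrite /upcross hs big_ord_recl big1 ?addn0; first by rewrite /= h0 h1.
move=> i _; rewrite lift0.
have := hin i.+1 isT; rewrite hs => /(_ ltac:(have := ltn_ord i; lia)) hi.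
by case: andP => //= -[/eqP ? _]; lia.
Qed.

Lemma upcross_pred (n : nat) : (1 <= n)%N ->
  (0 < upcross n%:Z p)%N -> (0 < upcross (n.-1)%:Z p)%N.
Proof.
move=> hn /sum_bool_gt0P [i /andP[/eqP e1 /eqP e2]].
have hi : (i < size p)%N by have := ltn_ord i; lia.
have [i' [hi' f1 f2 _]] := first_upcross hst (v := (n.-1)%:Z) ltac:(lia) hi ltac:(lia).
have hi'' : (i' < (size p).-1)%N by lia.
by apply/sum_bool_gt0P; exists (Ordinal hi''); rewrite /= f1 f2 !eqxx.
Qed.

(* Reaching depth [n+1] requires a climb through depth [n]: the step just
   before the first up-crossing into [n+1]. *)
Lemma climbs_gt0 (n : nat) : (0 < upcross (n%:Z + 1) p)%N -> (0 < climbs n%:Z p)%N.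
Proof.
move=> /sum_bool_gt0P [i /andP[/eqP e1 /eqP e2]].
have hi : (i.+1 < size p)%N by have := ltn_ord i; lia.
have [i0 [hi0 f1 f2 hl]] := first_upcross hst (v := n%:Z + 1) ltac:(lia) hi ltac:(lia).
have i0pos : (0 < i0)%N by case: i0 {hi0 hl} f1 f2 => //; rewrite h0; lia.
have hi0' : (i0.-1.+1 < size p)%N by rewrite prednK //; lia.
have := unit_stepsP hst hi0'; rewrite prednK // => e.
have := hl i0.-1 (leq_pred _) => hlt.
have hj : (i0.-1 < (size p).-1)%N by lia.
apply/sum_bool_gt0P; exists (Ordinal hj); rewrite /= prednK // hi0 /=.
by apply/and3P; split; apply/eqP; lia.
Qed.

Lemma climbs_top : climbs M%:Z p = 0%N.
Proof.
case: sc => _ _ hL hin _.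
apply: big1 => i _; case: and4P => // -[_ _ hi2 /eqP h].
case: (ltnP i.+2 (size p).-1) => h'; first by have := hin i.+2 isT h'; lia.
have e : (i.+2 = (size p).-1)%N by lia.
by move: h; rewrite e hL; lia.
Qed.

End Necessity.

(* Each climb through [n] is an up-crossing into [n] ... *)
Lemma climbs_le_upcross n p : (climbs n p <= upcross n p)%N.
Proof.
apply: leq_sum => i _.
by case: (ent p i == n - 1); case: (ent p i.+1 == n); rewrite //= ?leq_b1.
Qed.

(* ... followed by an up-crossing into [n+1]. *)
Lemma climbs_le_upcross_succ n p : (climbs n p <= upcross (n + 1) p)%N.
Proof.
case: (ltnP 1 (size p)) => hsz; last first.
  by rewrite /climbs big1 // => i _; have := ltn_ord i; lia.
have [s hs] : exists s, (size p).-1 = s.+1 by exists (size p - 2)%N; lia.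
have hsz' : size p = s.+2 by lia.
rewrite /climbs /upcross hs big_ord_recr big_ord_recl /= hsz' ltnn /= !andbF addn0.
apply: leq_trans (leq_addl _ _); apply: leq_sum => i _; rewrite (_ : bump 0 i = i.+1) //.
case: and4P => //= -[_ /eqP h1 _ /eqP h2].
by rewrite h1 h2 addrK !eqxx.
Qed.

Lemma kappa_LM M p : scattering_seq M p -> LM (kappa M p).
Proof.
move=> sc; split; first by rewrite kappaE // (upcross0 sc).
move=> n hn; rewrite !kappaE // inordK; last by have := ltn_ord n; lia.
exact: (@upcross_pred M p sc (nat_of_ord n) hn).
Qed.

Lemma beta_bounds M p (n : 'I_M.+1) : scattering_seq M p ->
  (minn 1 (ktilde (kappa M p) n) <= beta M p n <= minn (kappa M p n) (ktilde (kappa M p) n))%N.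
Proof.
move=> sc; rewrite betaE // kappaE // /ktilde.
case: ltnP => hn; last first.
  have -> : nat_of_ord n = M by have := ltn_ord n; lia.
  by rewrite (climbs_top sc) !minn0.
rewrite kappaE // inordK // leq_min climbs_le_upcross /=.
have -> : (n.+1)%:Z = n%:Z + 1 by lia.
rewrite climbs_le_upcross_succ andbT.
case: (posnP (upcross (n%:Z + 1) p)) => [->|h]; first by rewrite minn0.
by rewrite (minn_idPl (h : (1 <= _)%N)) (climbs_gt0 sc h).
Qed.

Lemma upcross_nil v : upcross v [::] = 0%N.
Proof. by rewrite /upcross big_ord0. Qed.

Lemma climbs_nil v : climbs v [::] = 0%N.
Proof. by rewrite /climbs big_ord0. Qed.

Lemma neq_succ (v : int) : (v + 1 == v) = false.
Proof. by apply/eqP; lia. Qed.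

Lemma succ_neq (v : int) : (v == v + 1) = false.
Proof. by apply/eqP; lia. Qed.

Lemma upcross_cons v x s :
  upcross v (x :: s) = ((x == (v - 1)%R) && (head (v + 1)%R s == v) + upcross v s)%N.
Proof.
case: s => [|y s]; first by rewrite /upcross /= !big_ord0 neq_succ andbF.
by rewrite /upcross /= big_ord_recl.
Qed.

Lemma climbs_cons v x s : climbs v (x :: s) =
  ([&& x == (v - 1)%R, head (v + 1)%R s == v & head v (behead s) == (v + 1)%R]
   + climbs v s)%N.
Proof.
have short t : (size t <= 2)%N -> climbs v t = 0%N.
  move=> h; apply: big1 => i _.
  by rewrite (_ : (i.+2 < size t)%N = false) ?andbF //; apply/negbTE; rewrite -leqNgt; lia.
case: s => [|y [|z s]].
- by rewrite /climbs /= !big_ord0 neq_succ andbF.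
- by rewrite !short //= succ_neq !andbF.
by rewrite /climbs big_ord_recl.
Qed.

Lemma upcross_join v p1 x p2 :
  upcross v (p1 ++ x :: p2) = (upcross v (rcons p1 x) + upcross v (x :: p2))%N.
Proof.
elim: p1 => [|a p1 IH].
  by rewrite /= [upcross v [:: x]]upcross_cons upcross_nil neq_succ andbF.
rewrite cat_cons rcons_cons upcross_cons IH [upcross v (a :: _)]upcross_cons addnA.
by case: p1 {IH}.
Qed.

Lemma climbs_join v p1 x p2 : x != v ->
  climbs v (p1 ++ x :: p2) = (climbs v (rcons p1 x) + climbs v (x :: p2))%N.
Proof.
move=> hx; elim: p1 => [|a p1 IH].
  by rewrite /= [climbs v [:: x]]climbs_cons climbs_nil neq_succ andbF.
rewrite cat_cons rcons_cons climbs_cons IH [climbs v (a :: _)]climbs_cons addnA.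
by case: p1 {IH} => [|c [|d p1]] //=; rewrite (negbTE hx) !andbF.
Qed.

Lemma upcross_rcons v s y : y != v -> upcross v (rcons s y) = upcross v s.
Proof.
move=> hy; case/lastP: s => [|s z]; first by rewrite upcross_cons neq_succ andbF.
rewrite -cats1 cat_rcons upcross_join upcross_cons /= (negbTE hy) andbF.
by rewrite upcross_cons neq_succ andbF upcross_nil !addn0.
Qed.

Lemma climbs_rcons v s y : y != v + 1 -> climbs v (rcons s y) = climbs v s.
Proof.
move=> hy; elim: s => [|a s IH]; first by rewrite /= climbs_cons neq_succ andbF.
rewrite rcons_cons climbs_cons IH [climbs v (a :: s)]climbs_cons.
by case: s {IH} => [|c [|d s]] //=; rewrite ?(negbTE hy) succ_neq !andbF.
Qed.

Lemma upcross_low v s : all (fun x => -1 <= x) s -> v <= -1 -> upcross v s = 0%N.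
Proof.
move=> ha hv; elim: s ha => [|x s IH] /=; first by rewrite upcross_nil.
move=> /andP[hx ha]; rewrite upcross_cons IH // (_ : (x == v - 1) = false) //.
by apply/eqP; lia.
Qed.

Lemma climbs_low v s : all (fun x => -1 <= x) s -> v <= -1 -> climbs v s = 0%N.
Proof.
move=> ha hv; elim: s ha => [|x s IH] /=; first by rewrite climbs_nil.
move=> /andP[hx ha]; rewrite climbs_cons IH // (_ : (x == v - 1) = false) //.
by apply/eqP; lia.
Qed.

Definition shift (s : seq int) : seq int := map (fun x => x + 1) s.

Lemma eq_shift (a b : int) : (a + 1 == b) = (a == b - 1).
Proof. by apply/eqP/eqP; lia. Qed.

Lemma upcross_shift v s : upcross v (shift s) = upcross (v - 1) s.
Proof.
elim: s => [|x s IH]; first by rewrite /shift /= !upcross_nil.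
rewrite /shift map_cons -/(shift s) [upcross v _]upcross_cons IH upcross_cons eq_shift.
case: s {IH} => [|y s] /=; last by rewrite eq_shift.
by rewrite neq_succ (_ : (v - 1 + 1 == v - 1) = false) // neq_succ.
Qed.

Lemma climbs_shift v s : climbs v (shift s) = climbs (v - 1) s.
Proof.
elim: s => [|x s IH]; first by rewrite /shift /= !climbs_nil.
rewrite /shift map_cons -/(shift s) [climbs v _]climbs_cons IH climbs_cons eq_shift.
case: s {IH} => [|y [|z s]] /=.
- by rewrite neq_succ (_ : (v - 1 + 1 == v - 1) = false) ?andbF // neq_succ.
- by rewrite eq_shift succ_neq (_ : (v - 1 == v - 1 + 1) = false) ?andbF // succ_neq.
by rewrite !eq_shift (_ : v + 1 - 1 = v - 1 + 1) //; lia.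
Qed.

(* Excursions of height [h]: unit-step sequences from [-1] back to [-1]
   staying within [-1, h].  A scattering sequence is the lift of one. *)
Definition adj (x y : int) : bool := `|y - x| == 1.

Definition excursion (h : int) (q : seq int) : Prop :=
  [/\ head 0 q = -1, last 0 q = -1,
      all (fun x => (-1 <= x) && (x <= h)) q & sorted adj q].

Definition lift (q : seq int) : seq int := -1 :: rcons (shift q) (-1).

Fixpoint glue (es : seq (seq int)) : seq int :=
  if es is e :: es' then e ++ behead (glue es') else [:: -1].

Section Excursion.
Variables (h : int) (q : seq int).
Hypothesis exc : excursion h q.

Lemma excursion_head : exists q', q = -1 :: q'.
Proof. by case: exc; case: q => [|x q'] //= -> _ _ _; exists q'. Qed.

Lemma excursion_last : exists q', q = rcons q' (-1).
Proof.
case: exc => _; case/lastP: q => [|q' z] //.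
by rewrite last_rcons => -> _ _; exists q'.
Qed.

Lemma excursion_ge : all (fun x => -1 <= x) q.
Proof. by case: exc => _ _ ha _; apply: sub_all ha => x /andP[]. Qed.

Lemma excursion_height : -1 <= h.
Proof.
have [q' e] := excursion_head; case: exc => _ _ /allP /(_ (-1)) + _.
by rewrite e inE eqxx => /(_ isT) /andP[_].
Qed.

Lemma excursion_lift : excursion (h + 1) (lift q).
Proof.
have hh := excursion_height; have [q' e] := excursion_head.
case: exc => _ hl ha hs; split=> //.
- by rewrite /lift /= last_rcons.
- rewrite /lift /= all_rcons /=; apply/and3P; split; [lia|lia|].
  by rewrite all_map; apply: sub_all ha => x /andP[? ?] /=; lia.
have path_shift x s : path adj (x + 1) (shift s) = path adj x s.
  elim: s x => [|y s IH] x //=.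
  by rewrite -/(shift s) IH /adj (_ : y + 1 - (x + 1) = y - x) //; lia.
have last_shift x s : last (x + 1) (shift s) = last x s + 1.
  by elim: s x => [|y s IH] x //=; rewrite -/(shift s) IH.
rewrite /lift /= rcons_path; apply/andP; split.
  by move: hs; rewrite e /shift map_cons /= -/(shift q') path_shift.
move: hl; rewrite e /shift map_cons /= -/(shift q') last_shift => ->.
by rewrite /adj; apply/eqP; lia.
Qed.

Lemma upcross_lift v : 0 <= v -> upcross v (lift q) = ((v == 0) + upcross (v - 1) q)%N.
Proof.
move=> hv; have [q' e] := excursion_head.
rewrite /lift upcross_cons upcross_rcons; last by apply/eqP; lia.
rewrite upcross_shift; congr (_ + _)%N; congr nat_of_bool.
rewrite e /shift map_cons rcons_cons /=.
by apply/andP/eqP => [[/eqP ? /eqP ?]|?]; [lia | split; apply/eqP; lia].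
Qed.

Lemma upcross_lift0 : upcross 0 (lift q) = 1%N.
Proof. by rewrite upcross_lift // upcross_low //; exact: excursion_ge. Qed.

Lemma upcross_liftS (w : nat) : upcross (w.+1)%:Z (lift q) = upcross w%:Z q.
Proof. by rewrite upcross_lift // (_ : (w.+1)%:Z - 1 = w%:Z); [|lia]. Qed.

Lemma climbs_liftS (w : nat) : climbs (w.+1)%:Z (lift q) = climbs w%:Z q.
Proof.
rewrite /lift climbs_cons climbs_rcons; last by apply/eqP; lia.
rewrite climbs_shift (_ : (w.+1)%:Z - 1 = w%:Z); last by lia.
by rewrite (_ : (-1 == w%:Z) = false) //; apply/eqP; lia.
Qed.

(* The lift climbs through level [0] iff [q] visits level [0]. *)
Lemma climbs_lift0 : climbs 0 (lift q) = (1 < size q)%N.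
Proof.
have [q' e] := excursion_head.
rewrite /lift climbs_cons climbs_rcons; last by apply/eqP; lia.
rewrite climbs_shift climbs_low; last by []; last exact: excursion_ge.
rewrite addn0 e /shift map_cons rcons_cons /=.
case: q' e => [|c q'] e //=.
case: exc => _ _ _; rewrite e /= => /andP[/eqP hc _].
have := excursion_ge; rewrite e /= => /andP[hc' _].
have -> : c = 0 by lia.
by rewrite eqxx.
Qed.

End Excursion.

Lemma excursion_single h : -1 <= h -> excursion h [:: -1].
Proof. by move=> hh; split=> //=; rewrite andbT; lia. Qed.

Lemma excursion_glue h es : -1 <= h -> (forall e, e \in es -> excursion h e) ->
  excursion h (glue es).
Proof.
move=> hh; elim: es => [|e es IH] hes /=; first exact: excursion_single.
have ee : excursion h e by apply: hes; rewrite inE eqxx.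
have eg : excursion h (glue es) by apply: IH => x hx; apply: hes; rewrite inE hx orbT.
have [t et] := excursion_head eg; have [e1 ee1] := excursion_head ee.
case: ee => h0 hl ha hs; case: eg; rewrite et /= => _ hl' /andP[_ ha'] hs'.
split.
- by rewrite ee1.
- by rewrite last_cat hl.
- by rewrite all_cat ha.
by move: hs hl; rewrite ee1 /= cat_path => -> ->.
Qed.

Lemma upcross_glue h v es : (forall e, e \in es -> excursion h e) ->
  upcross v (glue es) = (\sum_(e <- es) upcross v e)%N.
Proof.
elim: es => [|e es IH] hes /=.
  by rewrite big_nil upcross_cons upcross_nil neq_succ andbF.
have ee : excursion h e by apply: hes; rewrite inE eqxx.
have hes' x : x \in es -> excursion h x by move=> hx; apply: hes; rewrite inE hx orbT.
have [t et] := excursion_head (excursion_glue (excursion_height ee) hes').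
have [e' ->] := excursion_last ee.
by rewrite big_cons -IH // et /= cat_rcons upcross_join.
Qed.

Lemma climbs_glue h v es : 0 <= v -> (forall e, e \in es -> excursion h e) ->
  climbs v (glue es) = (\sum_(e <- es) climbs v e)%N.
Proof.
move=> hv; elim: es => [|e es IH] hes /=.
  by rewrite big_nil climbs_cons climbs_nil neq_succ andbF.
have ee : excursion h e by apply: hes; rewrite inE eqxx.
have hes' x : x \in es -> excursion h x by move=> hx; apply: hes; rewrite inE hx orbT.
have [t et] := excursion_head (excursion_glue (excursion_height ee) hes').
have [e' ->] := excursion_last ee.
by rewrite big_cons -IH // et /= cat_rcons climbs_join //; apply/eqP; lia.
Qed.

Lemma size_glue es : (forall e, e \in es -> 1 < size e)%N ->
  (1 < size (glue es))%N = (es != [::]).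
Proof.
case: es => [|e es] //= /(_ e (mem_head _ _)) he.
by rewrite size_cat (leq_trans he) ?leq_addr.
Qed.

Lemma scattering_lift M q : excursion (M%:Z - 1) q -> scattering_seq M (lift q).
Proof.
move=> exc; have [q' eq] := excursion_head exc.
have [_ _ _ hs] := excursion_lift exc; case: exc => _ _ ha _.
have hsz : size (lift q) = (size q).+2 by rewrite /lift /= size_rcons /shift size_map.
split.
- by rewrite hsz eq.
- by [].
- by rewrite /ent nth_last /lift /= last_rcons.
- move=> [//|j] _; rewrite hsz /= ltnS => hj.
  rewrite /ent /lift /= nth_rcons /shift size_map hj (nth_map 0) //.
  move/allP: ha => /(_ _ (mem_nth 0 hj)) /andP[h1 h2].
  by apply/andP; split; [rewrite -lerBlDr sub0r | rewrite -lerBrDr].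
move=> j hj; move: hs; rewrite /lift /= => /(pathP 0) /(_ j).
rewrite -/(lift q) /= size_rcons /shift size_map.
have hj' : (j < (size q).+1)%N by rewrite hsz in hj.
by move=> /(_ hj') /eqP.
Qed.

(* Distribute [es] among [kk] groups so that exactly [bb] groups are
   nonempty: [bb-1] singletons, one group with the rest, then empty ones. *)
Definition groups (T : Type) (kk bb : nat) (es : seq T) : seq (seq T) :=
  if bb is bb'.+1 then map (fun e => [:: e]) (take bb' es) ++ drop bb' es :: nseq (kk - bb) [::]
  else nseq kk [::].

Section Groups.
Variables (T : eqType) (kk bb : nat) (es : seq T).
Hypotheses (hbk : (bb <= kk)%N) (hbs : (bb <= size es)%N) (hpos : (0 < size es)%N -> (0 < bb)%N).

Lemma size_groups : size (groups kk bb es) = kk.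
Proof.
rewrite /groups; case: bb hbk hbs => [|bb'] h1 h2; first by rewrite size_nseq.
by rewrite size_cat size_map size_takel /= ?size_nseq; lia.
Qed.

Lemma flatten_groups : flatten (groups kk bb es) = es.
Proof.
have flatten_empty n : flatten (nseq n [::] : seq (seq T)) = [::] by elim: n.
rewrite /groups; case: bb hpos => [|bb'] h3.
  by rewrite flatten_empty; apply/esym/size0nil; case: (size es) h3 => // n /(_ isT).
by rewrite flatten_cat flatten_seq1 /= flatten_empty cats0 cat_take_drop.
Qed.

Lemma count_groups : (\sum_(g <- groups kk bb es) (g != [::]))%N = bb.
Proof.
have sum_empty n : (\sum_(g <- nseq n [::]) (g != [::] :> seq T))%N = 0%N.
  by elim: n => [|n IH]; rewrite ?big_nil // big_cons IH.
rewrite /groups; case: bb hbs => [|bb'] hs; first exact: sum_empty.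
rewrite big_cat big_map big_cons sum_empty /= (eq_bigr (fun=> 1%N)) //.
rewrite sum1_size size_takel; last by lia.
have -> : (drop bb' es != [::]) by rewrite -size_eq0 size_drop; lia.
by rewrite addn1.
Qed.

End Groups.

(* The tree picture: [node g] is a vertex at level [0] whose subtrees,
   one level deeper, are the excursions of [g]. *)
Definition node (g : seq (seq int)) : seq int := lift (glue g).

Section Node.
Variables (h : int) (g : seq (seq int)).
Hypotheses (hh : -1 <= h) (hg : forall e, e \in g -> excursion h e).

Let exc_glue : excursion h (glue g) := excursion_glue hh hg.

Lemma upcross_node (v : nat) :
  upcross v%:Z (node g) = if v is w.+1 then (\sum_(e <- g) upcross w%:Z e)%N else 1%N.
Proof.
case: v => [|w]; first exact: upcross_lift0 exc_glue.
by rewrite /node (upcross_liftS exc_glue) (upcross_glue _ hg).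
Qed.

Lemma climbs_node (v : nat) : (forall e, e \in g -> 1 < size e)%N ->
  climbs v%:Z (node g) = if v is w.+1 then (\sum_(e <- g) climbs w%:Z e)%N else (g != [::]) :> nat.
Proof.
move=> hsz; case: v => [|w]; first by rewrite /node (climbs_lift0 exc_glue) size_glue.
by rewrite /node climbs_liftS (climbs_glue _ hg).
Qed.

End Node.

(* One level of the tree: [kk] vertices, [bb] of them with children, sharing
   the subtrees [es] of the next level. *)
Definition level (kk bb : nat) (es : seq (seq int)) : seq (seq int) :=
  map node (groups kk bb es).

Section Level.
Variables (h : int) (kk bb : nat) (es : seq (seq int)).
Hypotheses (hh : -1 <= h) (hes : forall e, e \in es -> excursion h e /\ (1 < size e)%N).
Hypotheses (hbk : (bb <= kk)%N) (hbs : (bb <= size es)%N) (hpos : (0 < size es)%N -> (0 < bb)%N).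

Let in_groups g e : g \in groups kk bb es -> e \in g -> e \in es.
Proof.
by move=> hg he; rewrite -(flatten_groups kk hpos); apply/flattenP; exists g.
Qed.

Lemma size_level : size (level kk bb es) = kk.
Proof. by rewrite size_map size_groups. Qed.

Lemma level_lifts e : e \in level kk bb es -> exists q, e = lift q /\ excursion h q.
Proof.
case/mapP=> g hg ->; exists (glue g); split=> //.
by apply: excursion_glue hh _ => e' he'; have [] := hes (in_groups hg he').
Qed.

Lemma upcross_level (v : nat) : (\sum_(e <- level kk bb es) upcross v%:Z e)%N =
  if v is w.+1 then (\sum_(e <- es) upcross w%:Z e)%N else kk.
Proof.
rewrite big_map (eq_big_seq (fun g => upcross v%:Z (node g))) //.
rewrite (eq_big_seq (fun g => if v is w.+1 then \sum_(e <- g) upcross w%:Z e else 1)%N).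
  case: v => [|w]; first by rewrite sum1_size size_groups.
  by rewrite -big_flatten /= flatten_groups.
move=> g hg; apply: (upcross_node hh) => e he; by have [] := hes (in_groups hg he).
Qed.

Lemma climbs_level (v : nat) : (\sum_(e <- level kk bb es) climbs v%:Z e)%N =
  if v is w.+1 then (\sum_(e <- es) climbs w%:Z e)%N else bb.
Proof.
rewrite big_map.
rewrite (eq_big_seq (fun g => if v is w.+1 then \sum_(e <- g) climbs w%:Z e
                              else (g != [::]) :> nat)%N).
  case: v => [|w]; first exact: count_groups.
  by rewrite -big_flatten /= flatten_groups.
move=> g hg; apply: (climbs_node hh) => e he; by have [] := hes (in_groups hg he).
Qed.

End Level.

(* The tree with [kf n] vertices and [bf n] inner vertices at level [n],
   built bottom-up from level [n + d - 1] to level [n]. *)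
Fixpoint build (kf bf : nat -> nat) (d n : nat) : seq (seq int) :=
  if d is d'.+1 then level (kf n) (bf n) (build kf bf d' n.+1) else [::].

Section Build.
Variables (kf bf : nat -> nat) (M : nat).
Hypotheses (hbk : forall n, (bf n <= kf n)%N) (hbk' : forall n, (bf n <= kf n.+1)%N)
  (hpos : forall n, (0 < kf n.+1 -> 0 < bf n)%N) (hdeep : forall n, (M < n)%N -> kf n = 0%N).

Lemma build_spec d n : (n + d = M.+1)%N ->
  [/\ size (build kf bf d n) = kf n,
      forall e, e \in build kf bf d n -> exists q, e = lift q /\ excursion (d%:Z - 2) q,
      forall v : nat, (\sum_(e <- build kf bf d n) upcross v%:Z e = kf (n + v))%N
    & forall v : nat, (\sum_(e <- build kf bf d n) climbs v%:Z e = bf (n + v))%N].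
Proof.
elim: d n => [|d IH] n hnd.
  have hz v : kf (n + v) = 0%N by apply: hdeep; lia.
  split=> [|//|v|v]; rewrite ?big_nil ?hz //; first by have := hz 0; rewrite addn0.
  by have := hbk (n + v); rewrite hz; case: (bf _).
have [Is Im Iu Ib] := IH n.+1 ltac:(lia); rewrite /=.
have hh : -1 <= d%:Z - 1 by lia.
have hes e : e \in build kf bf d n.+1 -> excursion (d%:Z - 1) e /\ (1 < size e)%N.
  case/Im=> q [-> exc]; split; last by rewrite /lift /= size_rcons.
  by have := excursion_lift exc; rewrite (_ : d%:Z - 2 + 1 = d%:Z - 1) //; lia.
have hbs : (bf n <= size (build kf bf d n.+1))%N by rewrite Is.
have hpos' : (0 < size (build kf bf d n.+1) -> 0 < bf n)%N by rewrite Is; apply: hpos.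
split.
- exact: size_level (hbk n) hbs hpos'.
- move=> e /(level_lifts hh hes hpos') [q [-> exc]]; exists q.
  by rewrite (_ : d.+1%:Z - 2 = d%:Z - 1) //; lia.
- case=> [|w]; rewrite (upcross_level hh hes (hbk n) hbs hpos') ?addn0 // Iu.
  by rewrite addnS.
case=> [|w]; rewrite (climbs_level hh hes (hbk n) hbs hpos') ?addn0 // Ib.
by rewrite addnS.
Qed.

Lemma build_scattering : kf 0 = 1%N ->
  exists p, [/\ scattering_seq M p, forall v : nat, upcross v%:Z p = kf v
              & forall v : nat, climbs v%:Z p = bf v].
Proof.
move=> hk0; have [Is Im Iu Ib] := build_spec (d := M.+1) (n := 0) erefl.
move: Is Im Iu Ib; rewrite hk0; case: (build kf bf M.+1 0) => [|e [|//]] //= _ Im Iu Ib.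
have [q [he exc]] := Im e (mem_head _ _); subst e.
exists (lift q); split=> [|v|v].
- by apply: scattering_lift; rewrite (_ : M%:Z - 1 = M.+1%:Z - 2) //; lia.
- by have := Iu v; rewrite big_seq1.
by have := Ib v; rewrite big_seq1.
Qed.

End Build.

Definition extend M (k : {ffun 'I_M.+1 -> nat}) (n : nat) : nat :=
  if (n <= M)%N then k (inord n) else 0%N.

Lemma extend_ord M (k : {ffun 'I_M.+1 -> nat}) (n : 'I_M.+1) : extend k n = k n.
Proof. by rewrite /extend -ltnS ltn_ord inord_val. Qed.

Lemma extend_out M (k : {ffun 'I_M.+1 -> nat}) n : (M < n)%N -> extend k n = 0%N.
Proof. by move=> hn; rewrite /extend leqNgt hn. Qed.

Lemma ktilde_extend M (k : {ffun 'I_M.+1 -> nat}) (n : 'I_M.+1) :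
  ktilde k n = extend k n.+1.
Proof. by rewrite /ktilde /extend; case: ltnP. Qed.

Lemma realize M (k b : {ffun 'I_M.+1 -> nat}) : k ord0 = 1%N ->
  (forall n, minn 1 (ktilde k n) <= b n <= minn (k n) (ktilde k n))%N ->
  exists p, [/\ scattering_seq M p, kappa M p = k & beta M p = b].
Proof.
move=> hk0 hb.
have hb' n : (n <= M)%N ->
  (minn 1 (extend k n.+1) <= extend b n <= minn (extend k n) (extend k n.+1))%N.
  by move=> hn; have := hb (inord n); rewrite ktilde_extend inordK ?ltnS // /extend hn.
have [|||||p [sc hk hbeta]] := @build_scattering (extend k) (extend b) M.
- move=> n; case: (leqP n M) => [/hb' /andP[_]|/extend_out ->] //.
  by rewrite leq_min => /andP[].
- move=> n; case: (leqP n M) => [/hb' /andP[_]|/extend_out ->] //.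
  by rewrite leq_min => /andP[].
- move=> n hk; case: (leqP n M) => [/hb' /andP[+ _]|hn].
    by apply: leq_trans; rewrite leq_min leqnn hk.
  by rewrite (extend_out k (n := n.+1)) // in hk; apply: ltnW.
- exact: extend_out.
- by rewrite -hk0 -(extend_ord k ord0).
exists p; split=> //; apply/ffunP => n.
- by rewrite kappaE // hk extend_ord.
by rewrite betaE // hbeta extend_ord.
Qed.

Lemma LM_box M (k : {ffun 'I_M.+1 -> nat}) (n : 'I_M.+1) : LM k ->
  (minn 1 (ktilde k n) <= minn (k n) (ktilde k n))%N.
Proof.
case=> _ hmono; rewrite leq_min geq_minr andbT /ktilde.
case: ltnP => hn; last by rewrite minn0.
case: (posnP (k (inord n.+1))) => [->|hpos]; first by rewrite minn0.
have := hmono (inord n.+1); rewrite inordK //= => /(_ isT hpos).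
by rewrite inord_val; apply: leq_trans; apply: geq_minl.
Qed.

Theorem proposition6p1 (M : nat) (hM : (1 <= M)%N) :
  (forall k : {ffun 'I_M.+1 -> nat},
      (exists p : seq int, scattering_seq M p /\ kappa M p = k) <-> LM k) /\
  (forall k : {ffun 'I_M.+1 -> nat}, LM k ->
     forall b : {ffun 'I_M.+1 -> int},
       (exists p : seq int,
           [/\ scattering_seq M p, kappa M p = k & (fun n => Posz (beta M p n)) =1 b])
       <->
       (forall n : 'I_M.+1,
           (Posz (minn 1 (ktilde k n)) <= b n)%R /\
           (b n <= Posz (minn (k n) (ktilde k n)))%R)).
Proof.
split=> [k|k hLM b]; split.
- by case=> p [sc <-]; exact: kappa_LM.
- move=> hLM; have [|p [sc hk _]] := realize (b := [ffun n => minn 1 (ktilde k n)]) hLM.1.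
    by move=> n; rewrite ffunE leqnn LM_box.
  by exists p.
- by case=> p [sc <- hb] n; rewrite -hb !lez_nat; apply/andP; exact: beta_bounds.
move=> hbd; have b_ge0 n : 0 <= b n by case: (hbd n) => + _; apply: le_trans.
have [|p [sc hk hb]] := realize (b := [ffun n => `|b n|%N]) hLM.1.
  by move=> n; rewrite ffunE -!lez_nat abszE ger0_norm //; apply/andP; exact: hbd.
by exists p; split=> // n; rewrite hb ffunE abszE ger0_norm.
Qed.
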